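(* In the setting of the context, let $W(\lambda)=U(x,\lambda)V'(x,\lambda)-U'(x,\lambda)V(x,\lambda)$ (independent of $x\in(0,1)$) for $\lambda\in\mathbb C\setminus\sigma_1$, and let $\sigma_2=\{\lambda\in\mathbb C\setminus\sigma_1: W(\lambda)=0\}$. Then $\sigma_2$ is a discrete subset of $\mathbb R\setminus\sigma_1$. If $\delta_R\delta_B>1$ and $s(\lambda)=\sin(\sqrt\lambda)/\sqrt\lambda=0$, then $\lambda\in\sigma_2$. If $\lambda\in\sigma_2$ and $U(\cdot,\lambda)$ and $V(\cdot,\lambda)$ are not identically zero (which is the case if $s(\lambda)=0$), then $\lambda$ is an eigenvalue of the operator $\mathcal L$ on the tree $\mathcal T$.
   Context: $\mathcal T$ is the infinite biregular tree (vertex classes $\mathcal V_R,\mathcal V_B$, degrees $\delta_R+1$ and $\delta_B+1$, integers $\delta_B,\delta_R\ge1$), each edge identified with $[0,1]$; $\mathcal L$ acts by $-d^2/dx^2$ on $L^2(\mathcal T)=\bigoplus_eL^2(e)$ with domain the functions continuous on $\mathcal T$, $C^1$ on edges with absolutely continuous derivative, second derivative in $L^2$, and $\sum_{e\sim v}\partial_\nu f_e(v)=0$ at every vertex (outward derivatives). With $\omega=\sqrt\lambda$: $c=\cos\omega$, $c'=-\omega\sin\omega$, $s=\sin\omega/\omega$, $s'=\cos\omega$; $M_0=\begin{pmatrix}c&s\\c'&s'\end{pmatrix}$, $J_B=\operatorname{diag}(1,1/\delta_B)$, $J_R=\operatorname{diag}(1,1/\delta_R)$, $T_0(\lambda)=J_RM_0J_BM_0$;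 $\sigma_1=\{\lambda: T_0(\lambda)$ has an eigenvalue of modulus $(\delta_B\delta_R)^{-1/2}\}$, and on $\mathbb C\setminus\sigma_1$, $\mu^-(\lambda)$ is the analytic eigenvalue of $T_0(\lambda)$ with $|\mu^-|<(\delta_B\delta_R)^{-1/2}$. On $[0,1]$: $V(x,\lambda)=sc(1+\tfrac1{\delta_B})\cos(\omega x)+[\mu^--c^2-\tfrac{sc'}{\delta_B}]\tfrac{\sin(\omega x)}{\omega}$, $U(x,\lambda)=-sc(1+\tfrac1{\delta_R})\cos(\omega(1-x))-[\mu^--c^2-\tfrac{sc'}{\delta_R}]\tfrac{\sin(\omega(1-x))}{\omega}$. Fixing an edge $e_0=\{r_0,b_0\}$ ($r_0\in\mathcal V_R$) identified with $[0,1]$, $r_0\leftrightarrow 0$, $V$ extends to the union $\mathcal T_0$ of nonbacktracking rays $r_0,b_0,r_1,\dots$ and $U$ to the union $\mathcal T_1$ of rays $b_0,r_0,b_{-1},\dots$ as square integrable solutions of $-y''=\lambda y$ satisfying the vertex conditions away from $e_0$. *)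

From Stdlib Require Import Reals List Lia ClassicalEpsilon Factorial.
From Coquelicot Require Import Coquelicot.
Import ListNotations.

Open Scope R_scope.

Definition Cseries (a : nat -> C) : C :=
  (Series (fun n => fst (a n)), Series (fun n => snd (a n))).

(* cosw lam x = cos (sqrt lam * x) = sum_n (-lam)^n x^(2n)/(2n)!  ;
   independent of the branch of the square root. *)
Definition cosw (lam : C) (x : R) : C :=
  Cseries (fun n => Cmult (Cpow (Copp lam) n)
                          (RtoC (x ^ (2 * n) / INR (fact (2 * n))))).

(* sinw lam x = sin (sqrt lam * x) / sqrt lam
              = sum_n (-lam)^n x^(2n+1)/(2n+1)!  (= x when lam = 0). *)
Definition sinw (lam : C) (x : R) : C :=
  Cseries (fun n => Cmult (Cpow (Copp lam) n)
                          (RtoC (x ^ (2 * n + 1) / INR (fact (2 * n + 1))))).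

(* c = cos ω, s = sin ω / ω, c' = -ω sin ω = -λ s, s' = cos ω *)
Definition cc (lam : C) : C := cosw lam 1.
Definition ss (lam : C) : C := sinw lam 1.
Definition ccp (lam : C) : C := Copp (Cmult lam (ss lam)).
Definition ssp (lam : C) : C := cc lam.

(* a 2x2 matrix ((a,b),(c,d)) = [[a, b],[c, d]] *)
Definition mat2 := ((C * C) * (C * C))%type.

Definition m2mul (A B : mat2) : mat2 :=
  let '((a11, a12), (a21, a22)) := A in
  let '((b11, b12), (b21, b22)) := B in
  ((Cplus (Cmult a11 b11) (Cmult a12 b21), Cplus (Cmult a11 b12) (Cmult a12 b22)),
   (Cplus (Cmult a21 b11) (Cmult a22 b21), Cplus (Cmult a21 b12) (Cmult a22 b22))).

Definition M0 (lam : C) : mat2 := ((cc lam, ss lam), (ccp lam, ssp lam)).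

Definition Jd (delta : nat) : mat2 :=
  ((RtoC 1, RtoC 0), (RtoC 0, RtoC (/ INR delta))).

Definition T0 (dB dR : nat) (lam : C) : mat2 :=
  m2mul (Jd dR) (m2mul (M0 lam) (m2mul (Jd dB) (M0 lam))).

Definition is_eig2 (A : mat2) (mu : C) : Prop :=
  let '((a, b), (c, d)) := A in
  Cminus (Cmult (Cminus a mu) (Cminus d mu)) (Cmult b c) = RtoC 0.

Definition bound (dB dR : nat) : R := / sqrt (INR dB * INR dR).

Definition sigma1 (dB dR : nat) (lam : C) : Prop :=
  exists mu, is_eig2 (T0 dB dR lam) mu /\ Cmod mu = bound dB dR.

(* mu^-(lambda): the eigenvalue of T_0(lambda) of modulus < (dB dR)^(-1/2)
   (unique when lambda is not in sigma_1; arbitrary junk value otherwise). *)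
Definition mu_minus (dB dR : nat) (lam : C) : C :=
  epsilon (inhabits (RtoC 0))
    (fun mu => is_eig2 (T0 dB dR lam) mu /\ Cmod mu < bound dB dR).

Definition Vfun (dB dR : nat) (lam : C) (x : R) : C :=
  Cplus (Cmult (Cmult (Cmult (ss lam) (cc lam)) (RtoC (1 + / INR dB))) (cosw lam x))
        (Cmult (Cminus (Cminus (mu_minus dB dR lam) (Cmult (cc lam) (cc lam)))
                       (Cmult (Cmult (ss lam) (ccp lam)) (RtoC (/ INR dB))))
               (sinw lam x)).

Definition Ufun (dB dR : nat) (lam : C) (x : R) : C :=
  Copp (Cplus (Cmult (Cmult (Cmult (ss lam) (cc lam)) (RtoC (1 + / INR dR)))
                     (cosw lam (1 - x)))
              (Cmult (Cminus (Cminus (mu_minus dB dR lam) (Cmult (cc lam) (cc lam)))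
                             (Cmult (Cmult (ss lam) (ccp lam)) (RtoC (/ INR dR))))
                     (sinw lam (1 - x)))).

(* d/dx cos(ωx) = -λ sin(ωx)/ω ,  d/dx (sin(ωx)/ω) = cos(ωx) *)
Definition Vder (dB dR : nat) (lam : C) (x : R) : C :=
  Cplus (Cmult (Cmult (Cmult (ss lam) (cc lam)) (RtoC (1 + / INR dB)))
               (Copp (Cmult lam (sinw lam x))))
        (Cmult (Cminus (Cminus (mu_minus dB dR lam) (Cmult (cc lam) (cc lam)))
                       (Cmult (Cmult (ss lam) (ccp lam)) (RtoC (/ INR dB))))
               (cosw lam x)).

(* d/dx cos(ω(1-x)) = λ sin(ω(1-x))/ω ,  d/dx (sin(ω(1-x))/ω) = -cos(ω(1-x)) *)
Definition Uder (dB dR : nat) (lam : C) (x : R) : C :=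
  Copp (Cplus (Cmult (Cmult (Cmult (ss lam) (cc lam)) (RtoC (1 + / INR dR)))
                     (Cmult lam (sinw lam (1 - x))))
              (Cmult (Cminus (Cminus (mu_minus dB dR lam) (Cmult (cc lam) (cc lam)))
                             (Cmult (Cmult (ss lam) (ccp lam)) (RtoC (/ INR dR))))
                     (Copp (cosw lam (1 - x))))).

(* Wronskian W = U V' - U' V, evaluated at x = 1/2 (it is independent of x). *)
Definition Wr (dB dR : nat) (lam : C) : C :=
  let x := / 2 in
  Cminus (Cmult (Ufun dB dR lam x) (Vder dB dR lam x))
         (Cmult (Uder dB dR lam x) (Vfun dB dR lam x)).

Definition sigma2 (dB dR : nat) (lam : C) : Prop :=
  ~ sigma1 dB dR lam /\ Wr dB dR lam = RtoC 0.

(** Vertices are finite words [w : list nat] describing the path from a fixed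
   red root r0 = [] : entry k of the word is the choice of child of the vertex
   at depth k.  The vertex at depth k is red iff k is even.  The root has
   dR+1 children, every other red vertex dR children (plus its parent), every
   blue vertex dB children (plus its parent).  Every edge joins a vertex
   [w <> []] to its parent [removelast w]; we index that edge by [w]. *)

Definition nchild (dB dR : nat) (depth : nat) : nat :=
  if Nat.eqb depth 0 then S dR else if Nat.even depth then dR else dB.

Fixpoint valid_from (dB dR : nat) (k : nat) (w : list nat) : Prop :=
  match w with
  | [] => True
  | a :: w' => (a < nchild dB dR k)%nat /\ valid_from dB dR (S k) w'
  end.

Definition vertex (dB dR : nat) (v : list nat) : Prop := valid_from dB dR 0 v.
Definition edge (dB dR : nat) (e : list nat) : Prop := vertex dB dR e /\ e <> [].

(* Each edge is identified with [0,1], its red endpoint corresponding to 0 and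
   its blue endpoint to 1.  Hence every edge incident to a red vertex v meets v
   at x = 0, every edge incident to a blue vertex meets v at x = 1. *)
Definition endpt (v : list nat) : R := if Nat.even (length v) then 0 else 1.

Definition incident (dB dR : nat) (v : list nat) : list (list nat) :=
  (match v with [] => [] | _ => [v] end) ++
  map (fun i => v ++ [i]) (seq 0 (nchild dB dR (length v))).

(* outward normal derivative at v of the edge function with derivative g *)
Definition outder (v : list nat) (g : R -> C) : C :=
  if Nat.even (length v) then g 0 else Copp (g 1).

Fixpoint Csum (l : list C) : C :=
  match l with [] => RtoC 0 | z :: l' => Cplus z (Csum l') end.

(* lam is an eigenvalue of the Kirchhoff Laplacian L = -d^2/dx^2 on the tree:
   there is a nonzero f in L^2(T) in the domain of L with L f = lam f.
   f e is the function on edge e (coordinate x in [0,1]), g e its derivative.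
   On each edge: f_e is C^1 on [0,1] (derivative g_e continuous up to the
   endpoints) and -f_e'' = lam f_e; f is continuous at every vertex and
   satisfies the Kirchhoff condition; sum_e int_0^1 |f_e|^2 < oo. *)
Definition tree_eigenvalue (dB dR : nat) (lam : C) : Prop :=
  exists (f g : list nat -> R -> C),
    (forall e, edge dB dR e ->
       (forall x, 0 < x < 1 ->
          is_derive (f e) x (g e x) /\
          is_derive (g e) x (Copp (Cmult lam (f e x)))) /\
       filterlim (f e) (at_right 0) (locally (f e 0)) /\
       filterlim (g e) (at_right 0) (locally (g e 0)) /\
       filterlim (f e) (at_left 1) (locally (f e 1)) /\
       filterlim (g e) (at_left 1) (locally (g e 1))) /\
    (forall v, vertex dB dR v ->
       (forall e1 e2, In e1 (incident dB dR v) -> In e2 (incident dB dR v) ->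
          f e1 (endpt v) = f e2 (endpt v)) /\
       Csum (map (fun e => outder v (g e)) (incident dB dR v)) = RtoC 0) /\
    (exists M : R, forall l : list (list nat), NoDup l ->
       (forall e, In e l -> edge dB dR e) ->
       fold_right Rplus 0 (map (fun e => RInt (fun x => (Cmod (f e x)) ^ 2) 0 1) l)
         <= M) /\
    (exists e x, edge dB dR e /\ 0 <= x <= 1 /\ f e x <> RtoC 0).

(* The Wronskian is constant in x; at x = 0 the eigenvalue equation of mu^- and c^2 + lam s^2 = 1
   give W = s c^2 (1 + 1/dB) (1 + 1/dR) (1 - mu^-), and |mu^-| < (dB dR)^(-1/2) <= 1, so W = 0 iff
   s = 0 or c = 0.  Either condition makes lam a Dirichlet (resp. Dirichlet-Neumann) eigenvalue of
   -d^2/dx^2 on [0,1], hence real; the series are then sin and cos, so lam = (j pi/2)^2 with j >= 1,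
   and sigma_2 is discrete.  If s = 0 then T_0 = diag(1, 1/(dB dR)), so lam is outside sigma_1 iff
   dB dR > 1, and U, V are nonzero multiples of sin(w(1-x)), sin(wx).  If c = 0 then mu^- is -1/dB
   or -1/dR, which makes V or U vanish.  For lam = (k pi)^2, an eigenfunction on the tree is
   sin(k pi x) on every edge times a weight: +1 and -1 on two edges at the root and, further down,
   minus the parent's weight divided by the number of children.  It vanishes at the vertices,
   satisfies Kirchhoff's condition, and is square integrable because the number of edges grows by
   the factor dB dR >= 2 every two levels. *)

From Pilot Require Import Defs.
From Stdlib Require Import Reals List Lia Lra Factorial ClassicalEpsilon.
From Coquelicot Require Import Coquelicot.
Import ListNotations.
Open Scope R_scope.

(** * Odd and even power series with geometrically bounded coefficients *)

Definition odd_series (z : nat -> R) (x : R) : R :=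
  Series (fun n => z n * (x ^ (2 * n + 1) / INR (fact (2 * n + 1)))).
Definition even_series (z : nat -> R) (x : R) : R :=
  Series (fun n => z n * (x ^ (2 * n) / INR (fact (2 * n)))).

Definition odd_coef (z : nat -> R) (n : nat) : R := z n / INR (fact (2 * n + 1)).
Definition even_coef (z : nat -> R) (n : nat) : R := z n / INR (fact (2 * n)).

Lemma odd_series_PSeries z x : odd_series z x = x * PSeries (odd_coef z) (x ^ 2).
Proof.
  unfold odd_series, PSeries. rewrite <- Series_scal_l. apply Series_ext; intros n.
  unfold odd_coef. rewrite pow_add, pow_mult.
  field. apply INR_fact_neq_0.
Qed.

Lemma even_series_PSeries z x : even_series z x = PSeries (even_coef z) (x ^ 2).
Proof.
  unfold even_series, PSeries. apply Series_ext; intros n.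
  unfold even_coef. rewrite pow_mult. field. apply INR_fact_neq_0.
Qed.

Lemma odd_series_0 z : odd_series z 0 = 0.
Proof. now rewrite odd_series_PSeries, Rmult_0_l. Qed.

Lemma pow_div_fact_le_exp x n : 0 <= x -> x ^ n / INR (fact n) <= exp x.
Proof.
  intros Hx. eapply Rle_trans; [|apply (exp_ge_taylor x n Hx)].
  destruct n as [|m]; [simpl; lra|].
  rewrite tech5.
  enough (0 <= sum_f_R0 (fun k => x ^ k / INR (fact k)) m) by lra.
  apply cond_pos_sum; intros k. apply Rdiv_le_0_compat; [apply pow_le | apply INR_fact_lt_0]; auto.
Qed.

Lemma CV_radius_infinite_of_bound (a : nat -> R) M K : 0 <= K ->
  (forall n, Rabs (a n) <= M * K ^ n / INR (fact n)) ->
  forall x, Rbar_lt (Rabs x) (CV_radius a).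
Proof.
  intros HK Ha x.
  assert (HM : 0 <= M).
  { specialize (Ha 0%nat). simpl in Ha. pose proof (Rabs_pos (a 0%nat)). lra. }
  set (r := Rabs x + 1).
  assert (Hr : 0 <= r) by (unfold r; pose proof (Rabs_pos x); lra).
  apply Rbar_lt_le_trans with r; [simpl; unfold r; lra|].
  apply (proj1 (CV_radius_bounded a)). exists (M * exp (K * r)); intros n.
  rewrite Rabs_mult, (Rabs_pos_eq (r ^ n)) by (apply pow_le; auto).
  eapply Rle_trans; [apply Rmult_le_compat_r; [apply pow_le; auto | apply Ha]|].
  replace (M * K ^ n / INR (fact n) * r ^ n) with (M * ((K * r) ^ n / INR (fact n)))
    by (rewrite Rpow_mult_distr; field; apply INR_fact_neq_0).
  apply Rmult_le_compat_l; auto. apply pow_div_fact_le_exp. now apply Rmult_le_pos.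
Qed.

Lemma even_series_0 z : even_series z 0 = z 0%nat.
Proof.
  rewrite even_series_PSeries, pow_i, PSeries_0 by lia.
  unfold even_coef. simpl. field.
Qed.

Lemma fact_odd_INR n : INR (fact (2 * n + 1)) = (2 * INR n + 1) * INR (fact (2 * n)).
Proof.
  replace (2 * n + 1)%nat with (S (2 * n)) by lia.
  rewrite fact_simpl, mult_INR, S_INR, mult_INR. simpl. ring.
Qed.

Lemma fact_even_S_INR n : INR (fact (2 * S n)) = (2 * INR n + 2) * INR (fact (2 * n + 1)).
Proof.
  replace (2 * S n)%nat with (S (2 * n + 1)) by lia.
  rewrite fact_simpl, mult_INR, S_INR, plus_INR, mult_INR. simpl. ring.
Qed.

Lemma is_derive_eq_val {V : NormedModule R_AbsRing} (f : R -> V) x (l l' : V) :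
  is_derive f x l -> l = l' -> is_derive f x l'.
Proof. now intros H <-. Qed.

Lemma is_derive_sqr x : is_derive (fun t : R => t ^ 2) x (2 * x).
Proof. auto_derive; auto. ring. Qed.

Ltac R_eq := match goal with |- ?a = ?b => change (@eq R a b) end.

Ltac R_ops :=
  unfold scal, mult, plus, one;
  cbn -[Rmult Rplus Ropp Rinv Rdiv pow fact INR Nat.mul Nat.add];
  try R_eq.

Section GeometricCoefficients.

Variables (z : nat -> R) (M K : R).
Hypothesis K_ge0 : 0 <= K.
Hypothesis z_bound : forall n, Rabs (z n) <= M * K ^ n.

Lemma coef_div_fact_bound k n : Rabs (z n / INR (fact (2 * n + k))) <= M * K ^ n / INR (fact n).
Proof.
  unfold Rdiv. rewrite Rabs_mult, (Rabs_pos_eq (/ _)) by (left; apply Rinv_0_lt_compat, INR_fact_lt_0).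
  apply Rmult_le_compat; auto using Rabs_pos.
  - left; apply Rinv_0_lt_compat, INR_fact_lt_0.
  - apply Rinv_le_contravar; [apply INR_fact_lt_0|]. apply le_INR, fact_le. lia.
Qed.

Lemma odd_coef_radius x : Rbar_lt (Rabs x) (CV_radius (odd_coef z)).
Proof. apply (CV_radius_infinite_of_bound _ M K K_ge0), coef_div_fact_bound. Qed.

Lemma even_coef_radius x : Rbar_lt (Rabs x) (CV_radius (even_coef z)).
Proof.
  apply (CV_radius_infinite_of_bound _ M K K_ge0). intros n. unfold even_coef.
  rewrite <- (Nat.add_0_r (2 * n)). apply coef_div_fact_bound.
Qed.

Lemma ex_series_odd x : ex_series (fun n => z n * (x ^ (2 * n + 1) / INR (fact (2 * n + 1)))).
Proof.
  destruct (CV_radius_inside _ _ (odd_coef_radius (x ^ 2))) as [l Hl].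
  exists (x * l). eapply is_series_ext; [|exact (is_series_scal_l x _ _ Hl)]. intros n.
  unfold odd_coef. rewrite pow_n_pow, pow_add, pow_mult. R_ops. field. apply INR_fact_neq_0.
Qed.

Lemma ex_series_even x : ex_series (fun n => z n * (x ^ (2 * n) / INR (fact (2 * n)))).
Proof.
  destruct (CV_radius_inside _ _ (even_coef_radius (x ^ 2))) as [l Hl].
  exists l. eapply is_series_ext; [|exact Hl]. intros n.
  unfold even_coef. rewrite pow_n_pow, pow_mult. R_ops. field. apply INR_fact_neq_0.
Qed.

(* Coefficientwise form of [(x P(x^2))' = P(x^2) + 2 x^2 P'(x^2)] for [P = PSeries (odd_coef z)]. *)
Lemma PSeries_odd_coef_derive t :
  PSeries (odd_coef z) t + 2 * t * PSeries (PS_derive (odd_coef z)) t = PSeries (even_coef z) t.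
Proof.
  replace (2 * t * PSeries (PS_derive (odd_coef z)) t)
    with (PSeries (PS_scal 2 (PS_incr_1 (PS_derive (odd_coef z)))) t)
    by (rewrite PSeries_scal, PSeries_incr_1; ring).
  rewrite <- PSeries_plus.
  2: apply CV_radius_inside, odd_coef_radius.
  2: { apply CV_radius_inside. rewrite CV_radius_scal, CV_radius_incr_1, CV_radius_derive by lra.
       apply odd_coef_radius. }
  apply PSeries_ext. intros [|n]; unfold PS_plus, PS_scal, PS_incr_1, PS_derive, odd_coef, even_coef;
    R_ops.
  - simpl. field.
  - rewrite fact_odd_INR, fact_even_S_INR, S_INR.
    pose proof (INR_fact_lt_0 (2 * n + 1)). pose proof (pos_INR n).
    field. repeat split; lra.
Qed.

Lemma is_derive_odd_series x : is_derive (odd_series z) x (even_series z x).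
Proof.
  apply (is_derive_ext (fun t => t * PSeries (odd_coef z) (t ^ 2))).
  { intros t. symmetry. apply odd_series_PSeries. }
  rewrite even_series_PSeries, <- PSeries_odd_coef_derive.
  pose proof (is_derive_comp (PSeries (odd_coef z)) (fun t => t ^ 2) x _ _
    (is_derive_PSeries _ _ (odd_coef_radius _)) (is_derive_sqr x)) as Hcomp.
  eapply is_derive_eq_val.
  - exact (is_derive_mult (fun t => t) _ x _ _ (is_derive_id x) Hcomp Rmult_comm).
  - R_ops. ring.
Qed.

Lemma is_derive_even_series x : is_derive (even_series z) x (odd_series (fun n => z (S n)) x).
Proof.
  apply (is_derive_ext (fun t => PSeries (even_coef z) (t ^ 2))).
  { intros t. symmetry. apply even_series_PSeries. }
  assert (Hcoef : PSeries (odd_coef (fun n => z (S n))) (x ^ 2)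
                  = 2 * PSeries (PS_derive (even_coef z)) (x ^ 2)).
  { rewrite <- PSeries_scal. apply PSeries_ext. intros n.
    unfold PS_scal, PS_derive, odd_coef, even_coef. R_ops.
    rewrite fact_even_S_INR, S_INR.
    pose proof (INR_fact_lt_0 (2 * n + 1)). pose proof (pos_INR n).
    field. repeat split; lra. }
  rewrite odd_series_PSeries, Hcoef.
  eapply is_derive_eq_val.
  - exact (is_derive_comp (PSeries (even_coef z)) (fun t => t ^ 2) x _ _
      (is_derive_PSeries _ _ (even_coef_radius _)) (is_derive_sqr x)).
  - R_ops. ring.
Qed.

End GeometricCoefficients.

Lemma odd_series_ext (a b : nat -> R) x : (forall n, a n = b n) -> odd_series a x = odd_series b x.
Proof. intros H. apply Series_ext. intros n. now rewrite H. Qed.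

Lemma odd_series_lin (a b : nat -> R) (p q : R) x :
  ex_series (fun n => a n * (x ^ (2 * n + 1) / INR (fact (2 * n + 1)))) ->
  ex_series (fun n => b n * (x ^ (2 * n + 1) / INR (fact (2 * n + 1)))) ->
  odd_series (fun n => p * a n + q * b n) x = p * odd_series a x + q * odd_series b x.
Proof.
  intros Ha Hb. unfold odd_series.
  rewrite <- !Series_scal_l, <- Series_plus.
  - apply Series_ext. intros n. ring.
  - exact (ex_series_scal_l p _ Ha).
  - exact (ex_series_scal_l q _ Hb).
Qed.

(** * Complex-valued functions of a real variable *)

Lemma C_ext (a b : C) : fst a = fst b -> snd a = snd b -> a = b.
Proof. destruct a, b; simpl; intros; subst; auto. Qed.

Lemma Cmult_eq0 (a b : C) : (a * b)%C = RtoC 0 -> a = RtoC 0 \/ b = RtoC 0.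
Proof.
  intros H. assert (Hmod : Cmod a * Cmod b = 0) by (rewrite <- Cmod_mult, H; apply Cmod_0).
  destruct (Rmult_integral _ _ Hmod); [left | right]; now apply Cmod_eq_0.
Qed.

Lemma Cminus_eq0 (a b : C) : (a - b)%C = RtoC 0 -> a = b.
Proof. intros H. transitivity (a - b + b)%C; [ring | rewrite H; ring]. Qed.

Lemma Cplus_eq0_opp (a b : C) : (a + b)%C = RtoC 0 -> a = (- b)%C.
Proof. intros H. transitivity (a + b - b)%C; [ring | rewrite H; ring]. Qed.

Definition Cderive (f f' : R -> C) : Prop := forall x,
  is_derive (fun t => fst (f t)) x (fst (f' x)) /\
  is_derive (fun t => snd (f t)) x (snd (f' x)).

Lemma Cderive_ext f g f' g' :
  (forall x, f x = g x) -> (forall x, f' x = g' x) -> Cderive f f' -> Cderive g g'.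
Proof.
  intros Hfg Hfg' Hf x. destruct (Hf x) as [Hre Him]. rewrite <- Hfg'.
  split; eapply is_derive_ext; eauto; intros t; simpl; now rewrite Hfg.
Qed.

Lemma Cderive_plus f g f' g' : Cderive f f' -> Cderive g g' ->
  Cderive (fun x => f x + g x)%C (fun x => f' x + g' x)%C.
Proof.
  intros Hf Hg x. destruct (Hf x) as [Hf1 Hf2], (Hg x) as [Hg1 Hg2].
  split; [exact (is_derive_plus _ _ _ _ _ Hf1 Hg1) | exact (is_derive_plus _ _ _ _ _ Hf2 Hg2)].
Qed.

Lemma Cderive_opp f f' : Cderive f f' -> Cderive (fun x => - f x)%C (fun x => - f' x)%C.
Proof.
  intros Hf x. destruct (Hf x) as [Hf1 Hf2].
  split; [exact (is_derive_opp _ _ _ Hf1) | exact (is_derive_opp _ _ _ Hf2)].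
Qed.

Lemma Cderive_const (a : C) : Cderive (fun _ => a) (fun _ => RtoC 0).
Proof. intros x. split; exact (is_derive_const _ x). Qed.

Lemma is_derive_Rmult (u v : R -> R) x u' v' : is_derive u x u' -> is_derive v x v' ->
  is_derive (fun t => u t * v t) x (u' * v x + u x * v').
Proof. intros Hu Hv. exact (is_derive_mult u v x u' v' Hu Hv Rmult_comm). Qed.

Lemma Cderive_mult f g f' g' : Cderive f f' -> Cderive g g' ->
  Cderive (fun x => f x * g x)%C (fun x => f' x * g x + f x * g' x)%C.
Proof.
  intros Hf Hg x. destruct (Hf x) as [Hf1 Hf2], (Hg x) as [Hg1 Hg2].
  split; eapply is_derive_eq_val.
  - exact (is_derive_minus _ _ _ _ _ (is_derive_Rmult _ _ _ _ _ Hf1 Hg1)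
                                     (is_derive_Rmult _ _ _ _ _ Hf2 Hg2)).
  - simpl. R_ops. ring.
  - exact (is_derive_plus _ _ _ _ _ (is_derive_Rmult _ _ _ _ _ Hf1 Hg2)
                                    (is_derive_Rmult _ _ _ _ _ Hf2 Hg1)).
  - simpl. R_ops. ring.
Qed.

Lemma Cderive_scal (a : C) f f' : Cderive f f' -> Cderive (fun x => a * f x)%C (fun x => a * f' x)%C.
Proof.
  intros Hf. eapply Cderive_ext; [| | exact (Cderive_mult _ _ _ _ (Cderive_const a) Hf)].
  - reflexivity.
  - intros x. cbv beta. ring.
Qed.

Lemma Cderive_reflect f f' : Cderive f f' -> Cderive (fun x => f (1 - x)) (fun x => Copp (f' (1 - x))).
Proof.
  intros Hf x. destruct (Hf (1 - x)) as [Hf1 Hf2].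
  assert (Hd : is_derive (fun t : R => 1 - t) x (-1)) by (auto_derive; auto; ring).
  split; eapply is_derive_eq_val.
  - exact (is_derive_comp (fun t => fst (f t)) (fun t => 1 - t) _ _ _ Hf1 Hd).
  - R_ops. ring.
  - exact (is_derive_comp (fun t => snd (f t)) (fun t => 1 - t) _ _ _ Hf2 Hd).
  - R_ops. ring.
Qed.

Lemma is_derive_zero_const (h : R -> R) : (forall x, is_derive h x 0) -> forall a b, h a = h b.
Proof.
  intros H a b.
  destruct (MVT_gen h a b (fun _ => 0)) as [c [_ Hc]].
  - intros x _. apply H.
  - intros x _. apply continuity_pt_filterlim.
    exact (ex_derive_continuous h x (ex_intro _ 0 (H x))).
  - lra.
Qed.

Lemma Cderive_zero_const f : Cderive f (fun _ => RtoC 0) -> forall a b, f a = f b.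
Proof.
  intros H a b. apply C_ext.
  - apply (is_derive_zero_const (fun t => fst (f t))). intros x. apply (H x).
  - apply (is_derive_zero_const (fun t => snd (f t))). intros x. apply (H x).
Qed.

Lemma is_derive_zero_on_interval (phi : R -> R) a b x l :
  a < x < b -> (forall t, a < t < b -> phi t = 0) -> is_derive phi x l -> l = 0.
Proof.
  intros Hx Hzero Hd.
  assert (Hd0 : is_derive phi x 0).
  { apply (is_derive_ext_loc (fun _ => 0)); [|apply (is_derive_const (V := R_NormedModule))].
    assert (Hr : 0 < Rmin (x - a) (b - x)) by (apply Rmin_pos; lra).
    exists (mkposreal _ Hr). intros t Ht. symmetry. apply Hzero.
    apply Rabs_def2 in Ht. pose proof (Rmin_l (x - a) (b - x)). pose proof (Rmin_r (x - a) (b - x)).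
    change (minus t x) with (t - x) in Ht. simpl in Ht. lra. }
  apply is_derive_unique in Hd, Hd0. congruence.
Qed.

Lemma nonincreasing_zero_between (g g' : R -> R) :
  (forall x, is_derive g x (g' x)) -> (forall x, g' x <= 0) -> g 0 = 0 -> g 1 = 0 ->
  forall x, 0 < x < 1 -> g x = 0.
Proof.
  intros Hg Hg' H0 H1 x Hx.
  destruct (MVT_cor2 g g' 0 x) as [c1 [Hc1 _]]; [lra | intros c _; apply is_derive_Reals, Hg |].
  destruct (MVT_cor2 g g' x 1) as [c2 [Hc2 _]]; [lra | intros c _; apply is_derive_Reals, Hg |].
  pose proof (Hg' c1). pose proof (Hg' c2). nra.
Qed.

Definition Im_conj_mul (a b : C) : R := fst a * snd b - snd a * fst b.

Section SecondOrder.

Variables (lam : C) (u u' v v' : R -> C).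
Hypothesis Hu : Cderive u u'.
Hypothesis Hu' : Cderive u' (fun x => - (lam * u x))%C.
Hypothesis Hv : Cderive v v'.
Hypothesis Hv' : Cderive v' (fun x => - (lam * v x))%C.

Lemma wronskian_const a b : (u a * v' a - u' a * v a)%C = (u b * v' b - u' b * v b)%C.
Proof.
  apply (Cderive_zero_const (fun x => u x * v' x - u' x * v x)%C).
  eapply Cderive_ext; [| |
    exact (Cderive_plus _ _ _ _ (Cderive_mult _ _ _ _ Hu Hv')
                                (Cderive_opp _ _ (Cderive_mult _ _ _ _ Hu' Hv)))].
  - reflexivity.
  - intros x. simpl. ring.
Qed.

(* If [Im lam <> 0], then [Im lam * Im (conj u * u')] has derivative [- (Im lam)^2 |u|^2 <= 0]. *)
Lemma eigenvalue_real_of_flux :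
  Im_conj_mul (u 0) (u' 0) = 0 -> Im_conj_mul (u 1) (u' 1) = 0 ->
  (forall x, u x = RtoC 0 -> u' x <> RtoC 0) -> snd lam = 0.
Proof.
  intros Hflux0 Hflux1 Hnondeg.
  destruct (Req_dec (snd lam) 0) as [|Him]; [assumption | exfalso].
  set (g x := snd lam * Im_conj_mul (u x) (u' x)).
  set (g' x := - (snd lam * snd lam) * (fst (u x) * fst (u x) + snd (u x) * snd (u x))).
  assert (Hg : forall x, is_derive g x (g' x)).
  { intros x. destruct (Hu x) as [Hu1 Hu2], (Hu' x) as [Hu'1 Hu'2].
    pose proof (is_derive_minus _ _ _ _ _ (is_derive_Rmult _ _ _ _ _ Hu1 Hu'2)
                                          (is_derive_Rmult _ _ _ _ _ Hu2 Hu'1)) as Hd.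
    eapply is_derive_eq_val; [exact (is_derive_scal _ x (snd lam) _ Hd)|].
    unfold g'. cbn [Copp Cmult fst snd]. R_ops. ring. }
  assert (Hg'_nonpos : forall x, g' x <= 0).
  { intros x. unfold g'. rewrite <- Ropp_mult_distr_l.
    apply Ropp_le_cancel. rewrite Ropp_0, Ropp_involutive.
    apply Rmult_le_pos; nra. }
  assert (Hg_zero : forall x, 0 < x < 1 -> g x = 0).
  { apply (nonincreasing_zero_between g g' Hg Hg'_nonpos); unfold g;
      [rewrite Hflux0 | rewrite Hflux1]; ring. }
  assert (Hu_zero : forall x, 0 < x < 1 -> fst (u x) = 0 /\ snd (u x) = 0).
  { intros x Hx. pose proof (is_derive_zero_on_interval g 0 1 x _ Hx Hg_zero (Hg x)) as Hg'x.
    unfold g' in Hg'x.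
    assert (Hsq : fst (u x) * fst (u x) + snd (u x) * snd (u x) = 0).
    { destruct (Rmult_integral _ _ Hg'x) as [H|H]; [|exact H].
      pose proof (Rsqr_pos_lt _ Him). unfold Rsqr in *. lra. }
    split; nra. }
  apply (Hnondeg (/ 2)); apply C_ext; cbn [fst snd RtoC].
  - apply Hu_zero. lra.
  - apply Hu_zero. lra.
  - apply (is_derive_zero_on_interval (fun t => fst (u t)) 0 1 (/ 2)); [lra | | apply Hu].
    intros t Ht. apply Hu_zero, Ht.
  - apply (is_derive_zero_on_interval (fun t => snd (u t)) 0 1 (/ 2)); [lra | | apply Hu].
    intros t Ht. apply Hu_zero, Ht.
Qed.

End SecondOrder.

(** * The functions cos(ωx) and sin(ωx)/ω *)

Definition coef_re (lam : C) (n : nat) : R := fst (Cpow (Copp lam) n).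
Definition coef_im (lam : C) (n : nat) : R := snd (Cpow (Copp lam) n).

Lemma coef_re_bound lam n : Rabs (coef_re lam n) <= 1 * Cmod lam ^ n.
Proof.
  unfold coef_re. rewrite Rmult_1_l, <- Cmod_opp, <- Cmod_pow.
  eapply Rle_trans; [apply Rmax_l | apply Rmax_Cmod].
Qed.

Lemma coef_im_bound lam n : Rabs (coef_im lam n) <= 1 * Cmod lam ^ n.
Proof.
  unfold coef_im. rewrite Rmult_1_l, <- Cmod_opp, <- Cmod_pow.
  eapply Rle_trans; [apply Rmax_r | apply Rmax_Cmod].
Qed.

Lemma coef_re_S lam n : coef_re lam (S n) = - fst lam * coef_re lam n + snd lam * coef_im lam n.
Proof. unfold coef_re, coef_im. simpl. ring. Qed.

Lemma coef_im_S lam n : coef_im lam (S n) = - fst lam * coef_im lam n + - snd lam * coef_re lam n.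
Proof. unfold coef_re, coef_im. simpl. ring. Qed.

Lemma sinw_re lam x : fst (sinw lam x) = odd_series (coef_re lam) x.
Proof. apply Series_ext. intros n. unfold coef_re. simpl. ring. Qed.

Lemma sinw_im lam x : snd (sinw lam x) = odd_series (coef_im lam) x.
Proof. apply Series_ext. intros n. unfold coef_im. simpl. ring. Qed.

Lemma cosw_re lam x : fst (cosw lam x) = even_series (coef_re lam) x.
Proof. apply Series_ext. intros n. unfold coef_re. simpl. ring. Qed.

Lemma cosw_im lam x : snd (cosw lam x) = even_series (coef_im lam) x.
Proof. apply Series_ext. intros n. unfold coef_im. simpl. ring. Qed.

Lemma Cderive_sinw lam : Cderive (sinw lam) (cosw lam).
Proof.
  pose proof (Cmod_ge_0 lam) as K_ge0. intros x. split.
  - apply (is_derive_ext (odd_series (coef_re lam))); [intros t; symmetry; apply sinw_re|].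
    rewrite cosw_re. exact (is_derive_odd_series _ _ _ K_ge0 (coef_re_bound lam) x).
  - apply (is_derive_ext (odd_series (coef_im lam))); [intros t; symmetry; apply sinw_im|].
    rewrite cosw_im. exact (is_derive_odd_series _ _ _ K_ge0 (coef_im_bound lam) x).
Qed.

Lemma Cderive_cosw lam : Cderive (cosw lam) (fun x => - (lam * sinw lam x))%C.
Proof.
  pose proof (Cmod_ge_0 lam) as K_ge0. intros x.
  pose proof (ex_series_odd _ _ _ K_ge0 (coef_re_bound lam) x) as Hre.
  pose proof (ex_series_odd _ _ _ K_ge0 (coef_im_bound lam) x) as Him.
  split.
  - apply (is_derive_ext (even_series (coef_re lam))); [intros t; symmetry; apply cosw_re|].
    eapply is_derive_eq_val; [exact (is_derive_even_series _ _ _ K_ge0 (coef_re_bound lam) x)|].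
    rewrite (odd_series_ext _ _ x (coef_re_S lam)), odd_series_lin by assumption.
    cbn [Copp Cmult fst snd]. rewrite sinw_re, sinw_im. R_eq. ring.
  - apply (is_derive_ext (even_series (coef_im lam))); [intros t; symmetry; apply cosw_im|].
    eapply is_derive_eq_val; [exact (is_derive_even_series _ _ _ K_ge0 (coef_im_bound lam) x)|].
    rewrite (odd_series_ext _ _ x (coef_im_S lam)), odd_series_lin by assumption.
    cbn [Copp Cmult fst snd]. rewrite sinw_re, sinw_im. R_eq. ring.
Qed.

Lemma cosw_0 lam : cosw lam 0 = RtoC 1.
Proof. apply C_ext; [rewrite cosw_re | rewrite cosw_im]; now rewrite even_series_0. Qed.

Lemma sinw_0 lam : sinw lam 0 = RtoC 0.
Proof. apply C_ext; [rewrite sinw_re | rewrite sinw_im]; now rewrite odd_series_0. Qed.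

Lemma cosw_sqr_add_sinw_sqr lam x :
  (cosw lam x * cosw lam x + lam * (sinw lam x * sinw lam x))%C = RtoC 1.
Proof.
  assert (Hconst : Cderive (fun x => cosw lam x * cosw lam x + lam * (sinw lam x * sinw lam x))%C
                           (fun _ => RtoC 0)).
  { pose proof (Cderive_mult _ _ _ _ (Cderive_cosw lam) (Cderive_cosw lam)) as Hcc.
    pose proof (Cderive_scal lam _ _ (Cderive_mult _ _ _ _ (Cderive_sinw lam) (Cderive_sinw lam)))
      as Hss.
    eapply Cderive_ext; [| | exact (Cderive_plus _ _ _ _ Hcc Hss)].
    - reflexivity.
    - intros t. cbv beta. ring. }
  rewrite (Cderive_zero_const _ Hconst x 0), cosw_0, sinw_0. ring.
Qed.

Lemma Series_zero : Series (fun _ => 0) = 0.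
Proof. rewrite (Series_ext _ (fun _ => 0 * 0)) by (intros; ring). rewrite Series_scal_l. ring. Qed.

Lemma Series_ge_first (a : nat -> R) : ex_series a -> (forall n, 0 <= a n) -> a 0%nat <= Series a.
Proof.
  intros Hex Hpos. rewrite Series_incr_1 by exact Hex.
  enough (0 <= Series (fun k => a (S k))) by lra.
  rewrite <- Series_zero. apply Series_le.
  - intros n. split; [lra | apply Hpos].
  - now apply ex_series_incr_1 in Hex.
Qed.

Lemma odd_series_sin w x : w <> 0 -> odd_series (fun n => (- w ^ 2) ^ n) x = sin (w * x) / w.
Proof.
  intros Hw. unfold sin. destruct (exist_sin (Rsqr (w * x))) as [a Ha].
  apply is_series_Reals, is_series_unique in Ha.
  unfold odd_series. rewrite (Series_ext _ (fun n => x * (sin_n n * (Rsqr (w * x)) ^ n))).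
  - rewrite Series_scal_l, Ha. field. exact Hw.
  - intros n. unfold sin_n, Rsqr.
    replace (- w ^ 2) with (-1 * w ^ 2) by ring. replace (w * x * (w * x)) with (w ^ 2 * x ^ 2) by ring.
    rewrite pow_add, pow_mult, pow_1, !Rpow_mult_distr. field. apply INR_fact_neq_0.
Qed.

Lemma even_series_cos w x : even_series (fun n => (- w ^ 2) ^ n) x = cos (w * x).
Proof.
  unfold cos. destruct (exist_cos (Rsqr (w * x))) as [a Ha].
  apply is_series_Reals, is_series_unique in Ha. rewrite <- Ha.
  unfold even_series. apply Series_ext. intros n. unfold cos_n, Rsqr.
  replace (- w ^ 2) with (-1 * w ^ 2) by ring. replace (w * x * (w * x)) with (w ^ 2 * x ^ 2) by ring.
  rewrite pow_mult, !Rpow_mult_distr. field. apply INR_fact_neq_0.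
Qed.

Lemma Cpow_opp_RtoC l n : Cpow (Copp (RtoC l)) n = RtoC ((- l) ^ n).
Proof. induction n as [|n IH]; [reflexivity|]. simpl. rewrite IH. apply C_ext; simpl; ring. Qed.

Lemma sinw_real l x : sinw (RtoC l) x = RtoC (odd_series (fun n => (- l) ^ n) x).
Proof.
  unfold sinw, Cseries. apply C_ext; cbn [fst snd RtoC]; [|rewrite <- Series_zero];
    apply Series_ext; intros n; rewrite Cpow_opp_RtoC; simpl; ring.
Qed.

Lemma cosw_real l x : cosw (RtoC l) x = RtoC (even_series (fun n => (- l) ^ n) x).
Proof.
  unfold cosw, Cseries. apply C_ext; cbn [fst snd RtoC]; [|rewrite <- Series_zero];
    apply Series_ext; intros n; rewrite Cpow_opp_RtoC; simpl; ring.
Qed.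

Lemma sinw_sqr w x : w <> 0 -> sinw (RtoC (w ^ 2)) x = RtoC (sin (w * x) / w).
Proof. intros Hw. now rewrite sinw_real, odd_series_sin. Qed.

Lemma cosw_sqr w x : cosw (RtoC (w ^ 2)) x = RtoC (cos (w * x)).
Proof. now rewrite cosw_real, even_series_cos. Qed.

Lemma pow_bound_geometric q n : Rabs (q ^ n) <= 1 * Rabs q ^ n.
Proof. rewrite <- RPow_abs. lra. Qed.

Lemma odd_series_pow_ge1 q : 0 <= q -> 1 <= odd_series (fun n => q ^ n) 1.
Proof.
  intros Hq. eapply Rle_trans; [|apply Series_ge_first].
  - right. simpl. field.
  - exact (ex_series_odd _ 1 _ (Rabs_pos q) (pow_bound_geometric q) 1).
  - intros n. simpl. rewrite pow1. apply Rmult_le_pos; [now apply pow_le|].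
    apply Rdiv_le_0_compat; [lra | apply INR_fact_lt_0].
Qed.

Lemma even_series_pow_ge1 q : 0 <= q -> 1 <= even_series (fun n => q ^ n) 1.
Proof.
  intros Hq. eapply Rle_trans; [|apply Series_ge_first].
  - right. simpl. field.
  - exact (ex_series_even _ 1 _ (Rabs_pos q) (pow_bound_geometric q) 1).
  - intros n. simpl. rewrite pow1. apply Rmult_le_pos; [now apply pow_le|].
    apply Rdiv_le_0_compat; [lra | apply INR_fact_lt_0].
Qed.

Lemma Im_conj_mul_0_l b : Im_conj_mul (RtoC 0) b = 0.
Proof. unfold Im_conj_mul. simpl. ring. Qed.

Lemma Im_conj_mul_0_r a : Im_conj_mul a (RtoC 0) = 0.
Proof. unfold Im_conj_mul. simpl. ring. Qed.

(* [s = 0] (resp. [c = 0]) makes [lam] a Dirichlet (resp. Dirichlet-Neumann) eigenvalue of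
   [-d^2/dx^2] on [0,1]. *)
Lemma ss_cc_zero_real lam : ss lam = RtoC 0 \/ cc lam = RtoC 0 -> snd lam = 0.
Proof.
  pose proof (cosw_sqr_add_sinw_sqr lam) as Hpyth.
  intros [Hs | Hc].
  - apply (eigenvalue_real_of_flux lam (sinw lam) (cosw lam) (Cderive_sinw lam) (Cderive_cosw lam)).
    + now rewrite sinw_0, Im_conj_mul_0_l.
    + fold (ss lam). now rewrite Hs, Im_conj_mul_0_l.
    + intros x Hsx Hcx. specialize (Hpyth x). rewrite Hsx, Hcx in Hpyth.
      apply (f_equal fst) in Hpyth. simpl in Hpyth. lra.
  - apply (eigenvalue_real_of_flux lam (cosw lam) (fun x => - (lam * sinw lam x))%C (Cderive_cosw lam)
             (Cderive_opp _ _ (Cderive_scal lam _ _ (Cderive_sinw lam)))).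
    + rewrite sinw_0. replace (- (lam * RtoC 0))%C with (RtoC 0) by ring. apply Im_conj_mul_0_r.
    + fold (cc lam). now rewrite Hc, Im_conj_mul_0_l.
    + intros x Hcx Hsx. specialize (Hpyth x).
      replace (lam * (sinw lam x * sinw lam x))%C with (- (- (lam * sinw lam x)) * sinw lam x)%C in Hpyth
        by ring.
      rewrite Hsx, Hcx in Hpyth. apply (f_equal fst) in Hpyth. simpl in Hpyth. lra.
Qed.

Lemma ss_cc_zero_pos_sqr lam : ss lam = RtoC 0 \/ cc lam = RtoC 0 ->
  exists w, 0 < w /\ lam = RtoC (w ^ 2).
Proof.
  intros Hzero. pose proof (ss_cc_zero_real lam Hzero) as Hreal.
  destruct lam as [l l']. simpl in Hreal. subst l'. change (l, 0) with (RtoC l) in *.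
  destruct (Rle_or_lt l 0) as [Hl | Hl].
  - exfalso. unfold ss, cc in Hzero. rewrite sinw_real, cosw_real in Hzero.
    assert (Hl' : 0 <= - l) by lra.
    pose proof (odd_series_pow_ge1 _ Hl') as Hodd. pose proof (even_series_pow_ge1 _ Hl') as Heven.
    destruct Hzero as [Hz | Hz]; injection Hz as Hz; lra.
  - exists (sqrt l). split; [now apply sqrt_lt_R0|]. now rewrite pow2_sqrt by lra.
Qed.

Lemma ss_zero_sqr_pi lam : ss lam = RtoC 0 -> exists k : Z, (1 <= k)%Z /\ lam = RtoC ((IZR k * PI) ^ 2).
Proof.
  intros Hs. destruct (ss_cc_zero_pos_sqr lam (or_introl Hs)) as [w [Hw ->]].
  unfold ss in Hs. rewrite sinw_sqr, Rmult_1_r in Hs by lra. injection Hs as Hs.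
  assert (Hsin : sin w = 0) by (apply (Rmult_eq_reg_r (/ w)); [lra | apply Rinv_neq_0_compat; lra]).
  destruct (sin_eq_0_0 w Hsin) as [k Hk]. exists k. split; [|now rewrite <- Hk].
  apply le_IZR. pose proof PI_RGT_0. destruct (Rle_or_lt 1 (IZR k)) as [|Hlt]; [assumption|].
  apply lt_IZR in Hlt. assert (IZR k <= 0) by (apply IZR_le; lia). nra.
Qed.

Lemma cc_zero_sqr_pi lam : cc lam = RtoC 0 ->
  exists k : Z, (0 <= k)%Z /\ lam = RtoC ((IZR k * PI + PI / 2) ^ 2).
Proof.
  intros Hc. destruct (ss_cc_zero_pos_sqr lam (or_intror Hc)) as [w [Hw ->]].
  unfold cc in Hc. rewrite cosw_sqr, Rmult_1_r in Hc. injection Hc as Hcos.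
  destruct (cos_eq_0_0 w Hcos) as [k Hk]. exists k. split; [|now rewrite <- Hk].
  apply le_IZR. pose proof PI_RGT_0. destruct (Rle_or_lt 0 (IZR k)) as [|Hlt]; [assumption|].
  apply lt_IZR in Hlt. assert (IZR k <= -1) by (apply IZR_le; lia). nra.
Qed.

(** * The transfer matrix and the Wronskian *)

Lemma Csqrt_exists (z : C) : exists r, (r * r)%C = z.
Proof.
  destruct z as [a b]. set (m := sqrt (a * a + b * b)).
  assert (Hm : m * m = a * a + b * b) by (apply sqrt_sqrt; nra).
  assert (Ham : Rabs a <= m).
  { unfold m. rewrite <- sqrt_Rsqr_abs. apply sqrt_le_1_alt. unfold Rsqr. nra. }
  pose proof (Rle_abs a). pose proof (Rle_abs (- a)). rewrite Rabs_Ropp in *.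
  set (u := sqrt ((m + a) / 2)). set (v := sqrt ((m - a) / 2)).
  assert (Hu : u * u = (m + a) / 2) by (apply sqrt_sqrt; lra).
  assert (Hv : v * v = (m - a) / 2) by (apply sqrt_sqrt; lra).
  assert (Huv : u * v = Rabs b / 2).
  { unfold u, v. rewrite <- sqrt_mult by lra.
    replace ((m + a) / 2 * ((m - a) / 2)) with (Rsqr (b / 2)) by (unfold Rsqr; nra).
    rewrite sqrt_Rsqr_abs, Rabs_div by lra. rewrite (Rabs_pos_eq 2) by lra. reflexivity. }
  destruct (Rle_or_lt 0 b) as [Hb | Hb].
  - exists (u, v). rewrite Rabs_pos_eq in Huv by lra. apply C_ext; simpl; lra.
  - exists (u, - v). rewrite Rabs_left in Huv by lra. apply C_ext; simpl; lra.
Qed.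

Lemma quadratic_roots (t q : C) : exists m1 m2 : C, (m1 + m2)%C = t /\ (m1 * m2)%C = q.
Proof.
  destruct (Csqrt_exists (t * t - 4 * q)%C) as [r Hr].
  assert (H2 : RtoC 2 <> RtoC 0) by (intros H; injection H; lra).
  exists ((t + r) / 2)%C, ((t - r) / 2)%C. split.
  - field; exact H2.
  - transitivity ((t * t - r * r) / 4)%C.
    + field; exact H2.
    + rewrite Hr. field; exact H2.
Qed.

Definition det2 (A : mat2) : C := let '((a, b), (c, d)) := A in (a * d - b * c)%C.

Lemma eig2_pair (A : mat2) : exists m1 m2, is_eig2 A m1 /\ is_eig2 A m2 /\ (m1 * m2)%C = det2 A.
Proof.
  destruct A as [[a b] [c d]].
  destruct (quadratic_roots (a + d) (a * d - b * c))%C as (m1 & m2 & Hsum & Hprod).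
  exists m1, m2. unfold is_eig2, det2. rewrite Hprod. split; [|split; [|reflexivity]].
  - transitivity (m1 * m1 - (a + d) * m1 + (a * d - b * c))%C; [ring|].
    rewrite <- Hsum, <- Hprod. ring.
  - transitivity (m2 * m2 - (a + d) * m2 + (a * d - b * c))%C; [ring|].
    rewrite <- Hsum, <- Hprod. ring.
Qed.

Lemma cc_sqr_add_ss_sqr lam : (cc lam * cc lam + lam * (ss lam * ss lam))%C = RtoC 1.
Proof. apply cosw_sqr_add_sinw_sqr. Qed.

Lemma ss_zero_cc_sqr lam : ss lam = RtoC 0 -> (cc lam * cc lam)%C = RtoC 1.
Proof. intros Hs. rewrite <- (cc_sqr_add_ss_sqr lam), Hs. ring. Qed.

Lemma cc_zero_lam_ss_sqr lam : cc lam = RtoC 0 -> (lam * (ss lam * ss lam))%C = RtoC 1.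
Proof. intros Hc. rewrite <- (cc_sqr_add_ss_sqr lam), Hc. ring. Qed.

Lemma det2_T0 dB dR lam : det2 (T0 dB dR lam) = (RtoC (/ INR dB) * RtoC (/ INR dR))%C.
Proof.
  unfold det2, T0, m2mul, M0, Jd, ccp, ssp.
  transitivity (RtoC (/ INR dB) * RtoC (/ INR dR) *
    ((cc lam * cc lam + lam * (ss lam * ss lam)) * (cc lam * cc lam + lam * (ss lam * ss lam))))%C.
  - ring.
  - rewrite cc_sqr_add_ss_sqr. ring.
Qed.

Lemma INR_degree_ge1 d : (1 <= d)%nat -> 1 <= INR d.
Proof. intros Hd. now apply (le_INR 1). Qed.

Lemma one_add_inv_degree_neq0 d : (1 <= d)%nat -> (1 + RtoC (/ INR d))%C <> RtoC 0.
Proof.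
  intros Hd E. injection E as E.
  assert (0 < / INR d) by (apply Rinv_0_lt_compat, lt_0_INR; lia). lra.
Qed.

Section Degrees.

Variables dB dR : nat.
Hypothesis HdB : (1 <= dB)%nat.
Hypothesis HdR : (1 <= dR)%nat.

Lemma bound_sqr : Defs.bound dB dR * Defs.bound dB dR = / INR dB * / INR dR.
Proof.
  pose proof (INR_degree_ge1 _ HdB). pose proof (INR_degree_ge1 _ HdR).
  unfold Defs.bound. rewrite <- Rinv_mult, sqrt_sqrt, Rinv_mult by nra. reflexivity.
Qed.

Lemma bound_pos : 0 < Defs.bound dB dR.
Proof.
  pose proof (INR_degree_ge1 _ HdB). pose proof (INR_degree_ge1 _ HdR).
  unfold Defs.bound. apply Rinv_0_lt_compat, sqrt_lt_R0. nra.
Qed.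

Lemma bound_le_1 : Defs.bound dB dR <= 1.
Proof.
  pose proof bound_pos. pose proof bound_sqr.
  pose proof (INR_degree_ge1 _ HdB). pose proof (INR_degree_ge1 _ HdR).
  assert (/ INR dB * / INR dR <= 1).
  { rewrite <- Rinv_mult. rewrite <- Rinv_1. apply Rinv_le_contravar; nra. }
  nra.
Qed.

Lemma bound_lt_1 : (1 < dR * dB)%nat -> Defs.bound dB dR < 1.
Proof.
  intros Hprod. pose proof bound_pos. pose proof bound_sqr.
  assert (2 <= INR dR * INR dB) by (rewrite <- mult_INR; apply (le_INR 2); lia).
  assert (/ INR dB * / INR dR < 1).
  { rewrite <- Rinv_mult, <- Rinv_1. apply Rinv_lt_contravar; nra. }
  nra.
Qed.

Lemma Cmod_inv_degrees :
  Cmod (RtoC (/ INR dB) * RtoC (/ INR dR))%C = Defs.bound dB dR * Defs.bound dB dR.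
Proof.
  pose proof (INR_degree_ge1 _ HdB). pose proof (INR_degree_ge1 _ HdR).
  rewrite bound_sqr, Cmod_mult, !Cmod_R, !Rabs_pos_eq; [reflexivity | |];
    left; apply Rinv_0_lt_compat; lra.
Qed.

Lemma mu_minus_spec lam : ~ sigma1 dB dR lam ->
  is_eig2 (T0 dB dR lam) (mu_minus dB dR lam) /\ Cmod (mu_minus dB dR lam) < Defs.bound dB dR.
Proof.
  intros Hsigma1. unfold mu_minus. apply epsilon_spec.
  destruct (eig2_pair (T0 dB dR lam)) as (m1 & m2 & Heig1 & Heig2 & Hprod).
  rewrite det2_T0 in Hprod.
  assert (Hmod : Cmod m1 * Cmod m2 = Defs.bound dB dR * Defs.bound dB dR)
    by (rewrite <- Cmod_mult, Hprod; apply Cmod_inv_degrees).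
  assert (Cmod m1 <> Defs.bound dB dR) by (intros E; apply Hsigma1; exists m1; split; assumption).
  assert (Cmod m2 <> Defs.bound dB dR) by (intros E; apply Hsigma1; exists m2; split; assumption).
  pose proof bound_pos as Hb.
  destruct (Rlt_or_le (Cmod m1) (Defs.bound dB dR)) as [|Hm1]; [exists m1; split; assumption|].
  exists m2. split; [assumption|].
  destruct (Rlt_or_le (Cmod m2) (Defs.bound dB dR)) as [|Hm2]; [assumption|].
  assert (Defs.bound dB dR * Defs.bound dB dR < Cmod m1 * Cmod m2); [|lra].
  apply Rmult_le_0_lt_compat; lra.
Qed.

End Degrees.

Section Wronskian.

Variables (dB dR : nat) (lam : C).

Lemma Cderive_Vfun : Cderive (Vfun dB dR lam) (Vder dB dR lam).
Proof.
  unfold Vfun, Vder. apply Cderive_plus; apply Cderive_scal; [apply Cderive_cosw | apply Cderive_sinw].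
Qed.

Lemma Cderive_Vder : Cderive (Vder dB dR lam) (fun x => - (lam * Vfun dB dR lam x))%C.
Proof.
  eapply Cderive_ext.
  3: { unfold Vder. apply Cderive_plus; apply Cderive_scal;
         [apply Cderive_opp, Cderive_scal, Cderive_sinw | apply Cderive_cosw]. }
  - reflexivity.
  - intros x. cbv beta. unfold Vfun. ring.
Qed.

Lemma Cderive_Ufun : Cderive (Ufun dB dR lam) (Uder dB dR lam).
Proof.
  eapply Cderive_ext.
  3: { unfold Ufun. apply Cderive_opp, Cderive_plus; apply Cderive_scal, Cderive_reflect;
         [apply Cderive_cosw | apply Cderive_sinw]. }
  - reflexivity.
  - intros x. cbv beta. unfold Uder. ring.
Qed.

Lemma Cderive_Uder : Cderive (Uder dB dR lam) (fun x => - (lam * Ufun dB dR lam x))%C.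
Proof.
  eapply Cderive_ext.
  3: { unfold Uder. apply Cderive_opp, Cderive_plus; apply Cderive_scal;
         [apply Cderive_scal, Cderive_reflect, Cderive_sinw
         | apply Cderive_opp, Cderive_reflect, Cderive_cosw]. }
  - reflexivity.
  - intros x. cbv beta. unfold Ufun. ring.
Qed.

Lemma Wr_at_0 : Wr dB dR lam =
  (Ufun dB dR lam 0 * Vder dB dR lam 0 - Uder dB dR lam 0 * Vfun dB dR lam 0)%C.
Proof.
  exact (wronskian_const lam _ _ _ _ Cderive_Ufun Cderive_Uder Cderive_Vfun Cderive_Vder (/ 2) 0).
Qed.

Lemma Wr_eq : is_eig2 (T0 dB dR lam) (mu_minus dB dR lam) ->
  Wr dB dR lam = (ss lam * (cc lam * cc lam) * ((1 + RtoC (/ INR dB)) * (1 + RtoC (/ INR dR)))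
                  * (1 - mu_minus dB dR lam))%C.
Proof.
  intros Heig. pose proof (cc_sqr_add_ss_sqr lam) as Hpyth. rewrite Wr_at_0.
  unfold Ufun, Uder, Vfun, Vder. rewrite Rminus_0_r, cosw_0, sinw_0, !RtoC_plus. fold (cc lam) (ss lam).
  cbv beta iota zeta delta [is_eig2 T0 m2mul M0 Jd] in Heig. unfold ccp, ssp in *.
  set (c := cc lam) in *. set (s := ss lam) in *. set (m := mu_minus dB dR lam) in *.
  set (x := RtoC (/ INR dB)) in *. set (y := RtoC (/ INR dR)) in *.
  (* The difference is [s] times the characteristic polynomial of [T0] at [m] plus a multiple of
     [c^2 + lam s^2 - 1]. *)
  match type of Heig with ?E = _ =>
    transitivity (s * (c * c) * ((1 + x) * (1 + y)) * (1 - m) - s * E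
                  + s * (c * c) * ((1 + x) * (1 + y)) * ((c * c + lam * (s * s)) - 1))%C
  end.
  - ring.
  - rewrite Heig, Hpyth. ring.
Qed.

End Wronskian.

Lemma ss_zero_sinw_nonzero lam : ss lam = RtoC 0 -> exists x, 0 <= x <= 1 /\ sinw lam x <> RtoC 0.
Proof.
  intros Hs. destruct (ss_zero_sqr_pi lam Hs) as (k & Hk & ->).
  assert (Hk1 : 1 <= IZR k) by now apply IZR_le. pose proof PI_RGT_0.
  exists (/ (2 * IZR k)). split.
  - split; [left; apply Rinv_0_lt_compat; lra|].
    rewrite <- Rinv_1. apply Rinv_le_contravar; lra.
  - rewrite sinw_sqr by nra. replace (IZR k * PI * / (2 * IZR k)) with (PI / 2) by (field; lra).
    rewrite sin_PI2. intros E. injection E as E.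
    apply (Rmult_eq_compat_r (IZR k * PI)) in E. field_simplify in E; lra.
Qed.

Lemma IZR_sqr_gap (j j' : Z) :
  (1 <= j)%Z -> (1 <= j')%Z -> j <> j' -> 3 <= Rabs (IZR j' ^ 2 - IZR j ^ 2).
Proof.
  intros Hj Hj' Hne.
  assert (H : (3 <= j' * j' - j * j)%Z \/ (3 <= j * j - j' * j')%Z) by nia.
  destruct H as [H | H]; apply IZR_le in H; rewrite minus_IZR, !mult_IZR in H; simpl.
  - rewrite Rabs_pos_eq; nra.
  - rewrite Rabs_left1; nra.
Qed.

Section Spectrum.

Variables dB dR : nat.
Hypothesis HdB : (1 <= dB)%nat.
Hypothesis HdR : (1 <= dR)%nat.

Lemma mu_minus_neq1 lam : ~ sigma1 dB dR lam -> (1 - mu_minus dB dR lam)%C <> RtoC 0.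
Proof.
  intros Hsigma1 E. destruct (mu_minus_spec dB dR HdB HdR lam Hsigma1) as [_ Hmod].
  rewrite <- (Cminus_eq0 _ _ E), Cmod_R, Rabs_R1 in Hmod. pose proof (bound_le_1 dB dR HdB HdR). lra.
Qed.

Lemma sigma2_ss_or_cc lam : sigma2 dB dR lam -> ss lam = RtoC 0 \/ cc lam = RtoC 0.
Proof.
  intros [Hsigma1 HW].
  destruct (mu_minus_spec dB dR HdB HdR lam Hsigma1) as [Heig _].
  rewrite Wr_eq in HW by exact Heig.
  destruct (Cmult_eq0 _ _ HW) as [H | H]; [| exfalso; exact (mu_minus_neq1 lam Hsigma1 H)].
  destruct (Cmult_eq0 _ _ H) as [H' | H'].
  - destruct (Cmult_eq0 _ _ H') as [| Hcc]; [now left | right].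
    now destruct (Cmult_eq0 _ _ Hcc).
  - exfalso. destruct (Cmult_eq0 _ _ H') as [Hx | Hy];
      [exact (one_add_inv_degree_neq0 dB HdB Hx) | exact (one_add_inv_degree_neq0 dR HdR Hy)].
Qed.

Lemma sigma2_half_pi_multiple lam : sigma2 dB dR lam ->
  exists j : Z, (1 <= j)%Z /\ lam = RtoC ((IZR j * (PI / 2)) ^ 2).
Proof.
  intros Hsigma2. destruct (sigma2_ss_or_cc lam Hsigma2) as [Hs | Hc].
  - destruct (ss_zero_sqr_pi lam Hs) as (k & Hk & ->).
    exists (2 * k)%Z. split; [lia|]. rewrite mult_IZR. f_equal. field.
  - destruct (cc_zero_sqr_pi lam Hc) as (k & Hk & ->).
    exists (2 * k + 1)%Z. split; [lia|]. rewrite plus_IZR, mult_IZR. f_equal. field.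
Qed.

Lemma sigma2_real lam : sigma2 dB dR lam -> snd lam = 0.
Proof.
  intros Hsigma2. now destruct (sigma2_half_pi_multiple lam Hsigma2) as (j & _ & ->).
Qed.

Lemma sigma2_isolated lam : sigma2 dB dR lam ->
  exists eps : R, 0 < eps /\ forall mu, sigma2 dB dR mu -> Cmod (Cminus mu lam) < eps -> mu = lam.
Proof.
  intros Hlam. exists 1. split; [lra|]. intros mu Hmu Hdist.
  destruct (sigma2_half_pi_multiple lam Hlam) as (j & Hj & ->).
  destruct (sigma2_half_pi_multiple mu Hmu) as (j' & Hj' & ->).
  destruct (Z.eq_dec j j') as [-> | Hne]; [reflexivity | exfalso].
  pose proof (IZR_sqr_gap j j' Hj Hj' Hne). pose proof PI2_3_2.
  replace (Cminus (RtoC ((IZR j' * (PI / 2)) ^ 2)) (RtoC ((IZR j * (PI / 2)) ^ 2)))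
    with (RtoC ((PI / 2) ^ 2 * (IZR j' ^ 2 - IZR j ^ 2))) in Hdist by (apply C_ext; simpl; ring).
  rewrite Cmod_R, Rabs_mult, (Rabs_pos_eq ((PI / 2) ^ 2)) in Hdist by apply pow2_ge_0. nra.
Qed.

Lemma is_eig2_T0_ss_zero lam m : ss lam = RtoC 0 ->
  is_eig2 (T0 dB dR lam) m <-> ((1 - m) * (RtoC (/ INR dB) * RtoC (/ INR dR) - m))%C = RtoC 0.
Proof.
  intros Hs. pose proof (ss_zero_cc_sqr lam Hs) as Hc2.
  unfold is_eig2, T0, m2mul, M0, Jd, ccp, ssp. rewrite Hs.
  set (c := cc lam) in *. set (x := RtoC (/ INR dB)). set (y := RtoC (/ INR dR)).
  match goal with |- ?E = _ <-> _ =>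
    replace E with ((c * c - m) * (c * c * (x * y) - m))%C by ring end.
  rewrite Hc2. replace (1 * (x * y))%C with (x * y)%C by ring. reflexivity.
Qed.

Lemma is_eig2_T0_cc_zero lam m : cc lam = RtoC 0 -> is_eig2 (T0 dB dR lam) m ->
  ((m + RtoC (/ INR dB)) * (m + RtoC (/ INR dR)))%C = RtoC 0.
Proof.
  intros Hc Heig. pose proof (cc_zero_lam_ss_sqr lam Hc) as Hs2.
  unfold is_eig2, T0, m2mul, M0, Jd, ccp, ssp in Heig. rewrite Hc in Heig.
  set (s := ss lam) in *. set (x := RtoC (/ INR dB)) in *. set (y := RtoC (/ INR dR)) in *.
  rewrite <- Heig.
  transitivity ((m + x * (lam * (s * s))) * (m + y * (lam * (s * s))))%C; [now rewrite Hs2, !Cmult_1_r|].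
  ring.
Qed.

Lemma ss_zero_not_sigma1 lam : (1 < dR * dB)%nat -> ss lam = RtoC 0 -> ~ sigma1 dB dR lam.
Proof.
  intros Hprod Hs [m [Heig Hmod]].
  apply (is_eig2_T0_ss_zero lam m Hs) in Heig.
  pose proof (bound_lt_1 dB dR HdB HdR Hprod). pose proof (bound_pos dB dR HdB HdR).
  destruct (Cmult_eq0 _ _ Heig) as [E | E].
  - rewrite <- (Cminus_eq0 _ _ E), Cmod_R, Rabs_R1 in Hmod. lra.
  - rewrite <- (Cminus_eq0 _ _ E), Cmod_inv_degrees in Hmod by assumption. nra.
Qed.

Lemma ss_zero_sigma2 lam : (1 < dR * dB)%nat -> ss lam = RtoC 0 -> sigma2 dB dR lam.
Proof.
  intros Hprod Hs. pose proof (ss_zero_not_sigma1 lam Hprod Hs) as Hsigma1.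
  split; [exact Hsigma1|].
  rewrite Wr_eq by exact (proj1 (mu_minus_spec dB dR HdB HdR lam Hsigma1)).
  rewrite Hs. ring.
Qed.

Lemma ss_zero_Vfun lam x : ss lam = RtoC 0 ->
  Vfun dB dR lam x = ((mu_minus dB dR lam - 1) * sinw lam x)%C.
Proof.
  intros Hs. rewrite <- (ss_zero_cc_sqr lam Hs). unfold Vfun, ccp. rewrite Hs. ring.
Qed.

Lemma ss_zero_Ufun lam x : ss lam = RtoC 0 ->
  Ufun dB dR lam x = ((1 - mu_minus dB dR lam) * sinw lam (1 - x))%C.
Proof.
  intros Hs. rewrite <- (ss_zero_cc_sqr lam Hs). unfold Ufun, ccp. rewrite Hs. ring.
Qed.

Lemma cc_zero_Vfun lam x : cc lam = RtoC 0 -> mu_minus dB dR lam = (- RtoC (/ INR dB))%C ->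
  Vfun dB dR lam x = RtoC 0.
Proof.
  intros Hc Hm. unfold Vfun, ccp. rewrite Hc, Hm.
  transitivity (RtoC (/ INR dB) * (lam * (ss lam * ss lam) - 1) * sinw lam x)%C; [ring|].
  rewrite (cc_zero_lam_ss_sqr lam Hc). ring.
Qed.

Lemma cc_zero_Ufun lam x : cc lam = RtoC 0 -> mu_minus dB dR lam = (- RtoC (/ INR dR))%C ->
  Ufun dB dR lam x = RtoC 0.
Proof.
  intros Hc Hm. unfold Ufun, ccp. rewrite Hc, Hm.
  transitivity (- (RtoC (/ INR dR) * (lam * (ss lam * ss lam) - 1) * sinw lam (1 - x)))%C; [ring|].
  rewrite (cc_zero_lam_ss_sqr lam Hc). ring.
Qed.

Lemma cc_zero_U_or_V_zero lam : ~ sigma1 dB dR lam -> cc lam = RtoC 0 ->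
  (forall x, Ufun dB dR lam x = RtoC 0) \/ (forall x, Vfun dB dR lam x = RtoC 0).
Proof.
  intros Hsigma1 Hc.
  pose proof (is_eig2_T0_cc_zero lam _ Hc (proj1 (mu_minus_spec dB dR HdB HdR lam Hsigma1))) as Hm.
  destruct (Cmult_eq0 _ _ Hm) as [E | E]; [right | left]; intros x.
  - apply cc_zero_Vfun; [exact Hc | now apply Cplus_eq0_opp].
  - apply cc_zero_Ufun; [exact Hc | now apply Cplus_eq0_opp].
Qed.

Lemma ss_zero_U_V_nonzero lam : ~ sigma1 dB dR lam -> ss lam = RtoC 0 ->
  (exists x, 0 <= x <= 1 /\ Ufun dB dR lam x <> RtoC 0) /\
  (exists x, 0 <= x <= 1 /\ Vfun dB dR lam x <> RtoC 0).
Proof.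
  intros Hsigma1 Hs. destruct (ss_zero_sinw_nonzero lam Hs) as (x0 & Hx0 & Hsin).
  pose proof (mu_minus_neq1 lam Hsigma1) as Hm.
  assert (Hm' : (mu_minus dB dR lam - 1)%C <> RtoC 0).
  { intros E. apply Hm. rewrite (Cminus_eq0 _ _ E). ring. }
  split.
  - exists (1 - x0). split; [lra|]. rewrite ss_zero_Ufun by exact Hs.
    replace (1 - (1 - x0)) with x0 by ring. exact (Cmult_neq_0 _ _ Hm Hsin).
  - exists x0. split; [lra|]. rewrite ss_zero_Vfun by exact Hs. exact (Cmult_neq_0 _ _ Hm' Hsin).
Qed.

End Spectrum.

(** * An eigenfunction on the tree *)

Definition lsum {A} (h : A -> R) (l : list A) : R := fold_right Rplus 0 (map h l).

Lemma lsum_app {A} (h : A -> R) l1 l2 : lsum h (l1 ++ l2) = lsum h l1 + lsum h l2.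
Proof. induction l1 as [|a l1 IH]; unfold lsum in *; simpl; [ring | rewrite IH; ring]. Qed.

Lemma lsum_map {A B} (h : B -> R) (f : A -> B) l : lsum h (map f l) = lsum (fun x => h (f x)) l.
Proof. unfold lsum. now rewrite map_map. Qed.

Lemma lsum_flat_map {A B} (h : B -> R) (f : A -> list B) l :
  lsum h (flat_map f l) = lsum (fun x => lsum h (f x)) l.
Proof. induction l as [|a l IH]; [reflexivity|]. simpl. now rewrite lsum_app, IH. Qed.

Lemma lsum_ext {A} (h h' : A -> R) l : (forall x, h x = h' x) -> lsum h l = lsum h' l.
Proof. intros H. unfold lsum. f_equal. now apply map_ext. Qed.

Lemma lsum_const {A} (c : R) (l : list A) : lsum (fun _ => c) l = INR (length l) * c.
Proof.
  induction l as [|a l IH]; unfold lsum in *; cbn [map fold_right length]; [simpl; ring|].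
  rewrite IH, S_INR. ring.
Qed.

Lemma lsum_scal {A} (c : R) (h : A -> R) l : lsum (fun x => c * h x) l = c * lsum h l.
Proof. induction l as [|a l IH]; unfold lsum in *; simpl; [ring | rewrite IH; ring]. Qed.

Lemma lsum_le {A} (h h' : A -> R) l : (forall x, In x l -> h x <= h' x) -> lsum h l <= lsum h' l.
Proof.
  induction l as [|a l IH]; intros H; unfold lsum in *; simpl; [lra|].
  apply Rplus_le_compat; [apply H; now left | apply IH; intros; apply H; now right].
Qed.

Lemma lsum_nonneg {A} (h : A -> R) l : (forall x, 0 <= h x) -> 0 <= lsum h l.
Proof. intros H. induction l as [|a l IH]; unfold lsum in *; simpl; [lra | pose proof (H a); lra]. Qed.

Lemma lsum_incl {A} (h : A -> R) (l L : list A) : (forall x, 0 <= h x) ->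
  NoDup l -> incl l L -> lsum h l <= lsum h L.
Proof.
  intros Hpos. revert L. induction l as [|a l IH]; intros L Hnodup Hincl.
  - now apply lsum_nonneg.
  - inversion Hnodup as [|? ? Hnotin Hnodup']; subst.
    destruct (in_split a L (Hincl a (or_introl eq_refl))) as (L1 & L2 & ->).
    assert (Hincl' : incl l (L1 ++ L2)).
    { intros x Hx. pose proof (Hincl x (or_intror Hx)) as Hx'.
      apply in_app_or in Hx'. apply in_or_app. destruct Hx' as [|[<- | ]]; tauto. }
    specialize (IH _ Hnodup' Hincl').
    rewrite lsum_app in *. unfold lsum in *. simpl. lra.
Qed.

Lemma Csum_RtoC {A} (h : A -> R) l : Csum (map (fun e => RtoC (h e)) l) = RtoC (lsum h l).
Proof.
  induction l as [|a l IH]; [reflexivity|].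
  cbn [map Csum]. rewrite IH. unfold lsum. cbn [map fold_right]. now rewrite RtoC_plus.
Qed.

Section TreeWeights.

Variables dB dR : nat.
Hypothesis HdB : (1 <= dB)%nat.
Hypothesis HdR : (1 <= dR)%nat.

Lemma nchild_pos k : (1 <= nchild dB dR k)%nat.
Proof. unfold nchild. destruct (Nat.eqb k 0); [lia | destruct (Nat.even k); lia]. Qed.

Lemma INR_nchild_pos k : 0 < INR (nchild dB dR k).
Proof. apply lt_0_INR. pose proof (nchild_pos k). lia. Qed.

Fixpoint branch_prod (k n : nat) : R :=
  match n with 0 => 1 | S n' => INR (nchild dB dR k) * branch_prod (S k) n' end.

Lemma branch_prod_pos k n : 0 < branch_prod k n.
Proof.
  revert k. induction n as [|n IH]; intros k; simpl; [lra|].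
  apply Rmult_lt_0_compat; [apply INR_nchild_pos | apply IH].
Qed.

Lemma branch_prod_S k n : branch_prod k (S n) = branch_prod k n * INR (nchild dB dR (k + n)).
Proof.
  revert k. induction n as [|n IH]; intros k.
  - simpl. rewrite Nat.add_0_r. ring.
  - change (branch_prod k (S (S n))) with (INR (nchild dB dR k) * branch_prod (S k) (S n)).
    rewrite IH. replace (S k + n)%nat with (k + S n)%nat by lia. simpl. ring.
Qed.

Definition root_sign (i : nat) : R := if Nat.eqb i 0 then 1 else if Nat.eqb i 1 then -1 else 0.

(* The edge [i :: w'] lies [length w'] levels below the root edge [[i]]; only the subtrees of
   [[0]] and [[1]] carry weight. *)
Definition weight (w : list nat) : R :=
  match w with
  | [] => 0
  | i :: w' => root_sign i * (-1) ^ length w' / branch_prod 1 (length w')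
  end.

Lemma weight_snoc v i : v <> [] -> weight (v ++ [i]) = - weight v / INR (nchild dB dR (length v)).
Proof.
  intros Hv. destruct v as [|i0 v']; [congruence|].
  change ((i0 :: v') ++ [i]) with (i0 :: (v' ++ [i])). unfold weight.
  rewrite length_app, Nat.add_1_r, branch_prod_S, <- tech_pow_Rmult.
  replace (1 + length v')%nat with (S (length v')) by lia. cbn [length].
  pose proof (branch_prod_pos 1 (length v')). pose proof (INR_nchild_pos (S (length v'))).
  field. split; lra.
Qed.

Lemma root_sign_sum_from2 s n : (2 <= s)%nat -> lsum root_sign (seq s n) = 0.
Proof.
  revert s. induction n as [|n IH]; intros s Hs; [reflexivity|].
  simpl. unfold lsum in *. simpl. rewrite IH by lia.
  unfold root_sign. destruct (Nat.eqb_spec s 0); [lia|]. destruct (Nat.eqb_spec s 1); [lia|]. ring.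
Qed.

Lemma weight_kirchhoff v : lsum weight (incident dB dR v) = 0.
Proof.
  unfold incident. destruct v as [|i0 v'].
  - cbn [app length]. rewrite lsum_map.
    replace (nchild dB dR 0) with (S (S (dR - 1))) by (unfold nchild; simpl; lia).
    cbn [seq]. unfold lsum. cbn [map fold_right]. fold (lsum (fun x => weight [x]) (seq 2 (dR - 1))).
    rewrite (lsum_ext _ root_sign) by (intros x; unfold weight; simpl; field).
    rewrite root_sign_sum_from2 by lia. unfold weight, root_sign. simpl. field.
  - change ([i0 :: v'] ++ map (fun i => (i0 :: v') ++ [i]) (seq 0 (nchild dB dR (length (i0 :: v')))))
      with ([i0 :: v'] ++ map (fun i => (i0 :: v') ++ [i]) (seq 0 (nchild dB dR (S (length v'))))).
    rewrite lsum_app, lsum_map.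
    rewrite (lsum_ext (fun x => weight ((i0 :: v') ++ [x]))
                      (fun _ => - weight (i0 :: v') / INR (nchild dB dR (S (length v')))))
      by (intros x; apply weight_snoc; congruence).
    rewrite lsum_const, length_seq. unfold lsum. simpl.
    pose proof (INR_nchild_pos (S (length v'))). pose proof (branch_prod_pos 1 (length v')).
    field. split; lra.
Qed.

Fixpoint words_from (k n : nat) : list (list nat) :=
  match n with
  | 0 => [[]]
  | S n' => flat_map (fun a => map (cons a) (words_from (S k) n')) (seq 0 (nchild dB dR k))
  end.

Lemma words_from_complete w k : valid_from dB dR k w -> In w (words_from k (length w)).
Proof.
  revert k. induction w as [|a w IH]; intros k Hw; [now left|].
  destruct Hw as [Ha Hw]. apply in_flat_map. exists a. split.
  - apply in_seq. lia.
  - apply in_map, IH, Hw.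
Qed.

Lemma words_from_length k n w : In w (words_from k n) -> length w = n.
Proof.
  revert k w. induction n as [|n IH]; intros k w Hw; simpl in Hw.
  - now destruct Hw as [<- | []].
  - apply in_flat_map in Hw. destruct Hw as [a [_ Hw]]. apply in_map_iff in Hw.
    destruct Hw as [w' [<- Hw']]. simpl. f_equal. exact (IH _ _ Hw').
Qed.

Lemma lsum_const_words_from k n c : lsum (fun _ => c) (words_from k n) = c * branch_prod k n.
Proof.
  revert k. induction n as [|n IH]; intros k; [unfold lsum; simpl; ring|].
  simpl words_from. rewrite lsum_flat_map.
  rewrite (lsum_ext _ (fun _ => c * branch_prod (S k) n)) by (intros a; rewrite lsum_map; apply IH).
  rewrite lsum_const, length_seq. simpl. ring.
Qed.

Lemma weight_sqr_level n :
  lsum (fun e => weight e * weight e) (words_from 0 (S n)) <= INR (S dR) / branch_prod 1 n.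
Proof.
  pose proof (branch_prod_pos 1 n) as Hp.
  eapply Rle_trans; [apply (lsum_le _ (fun _ => / (branch_prod 1 n * branch_prod 1 n)))|].
  - intros e He. apply words_from_length in He. destruct e as [|i w]; [discriminate|].
    injection He as He. unfold weight. rewrite He.
    assert (Hsign : root_sign i * root_sign i <= 1)
      by (unfold root_sign; destruct (Nat.eqb i 0); [|destruct (Nat.eqb i 1)]; lra).
    assert (Hpow : (-1) ^ n * (-1) ^ n = 1)
      by (rewrite <- Rpow_mult_distr, <- (pow1 n); f_equal; ring).
    replace (root_sign i * (-1) ^ n / branch_prod 1 n * (root_sign i * (-1) ^ n / branch_prod 1 n))
      with (root_sign i * root_sign i * ((-1) ^ n * (-1) ^ n) / (branch_prod 1 n * branch_prod 1 n))
      by (field; lra).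
    rewrite Hpow, Rmult_1_r. unfold Rdiv.
    assert (0 < / (branch_prod 1 n * branch_prod 1 n)) by (apply Rinv_0_lt_compat; nra). nra.
  - rewrite lsum_const_words_from. right.
    change (branch_prod 0 (S n)) with (INR (S dR) * branch_prod 1 n).
    field. lra.
Qed.

Lemma inv_branch_prod_S n : / branch_prod 1 (S n) <= / branch_prod 1 n.
Proof.
  rewrite branch_prod_S. pose proof (branch_prod_pos 1 n).
  assert (1 <= INR (nchild dB dR (1 + n))) by (apply (le_INR 1), nchild_pos).
  apply Rinv_le_contravar; nra.
Qed.

Hypothesis Hprod : (1 < dR * dB)%nat.

(* Two consecutive levels multiply the number of edges by [dR * dB >= 2]. *)
Lemma inv_branch_prod_SS n : / branch_prod 1 (S (S n)) <= / branch_prod 1 n / 2.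
Proof.
  rewrite !branch_prod_S. pose proof (branch_prod_pos 1 n).
  assert (Hgrowth : 2 <= INR (nchild dB dR (1 + n)) * INR (nchild dB dR (1 + S n))).
  { assert (2 <= INR dR * INR dB) by (rewrite <- mult_INR; apply (le_INR 2); lia).
    replace (1 + S n)%nat with (S (S n)) by lia. replace (1 + n)%nat with (S n) by lia.
    unfold nchild. simpl Nat.eqb. cbv iota.
    replace (Nat.even (S (S n))) with (Nat.even n) by reflexivity.
    rewrite Nat.even_succ, <- Nat.negb_even. destruct (Nat.even n); simpl; lra. }
  replace (/ branch_prod 1 n / 2) with (/ (branch_prod 1 n * 2)) by (field; lra).
  apply Rinv_le_contravar; [lra|]. rewrite Rmult_assoc. apply Rmult_le_compat_l; lra.
Qed.

Lemma lsum_inv_branch_prod_seq D m :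
  lsum (fun n => / branch_prod 1 n) (seq m D) <= 4 * / branch_prod 1 m.
Proof.
  enough (H : forall m, lsum (fun n => / branch_prod 1 n) (seq m D) <= 4 * / branch_prod 1 m
                    /\ lsum (fun n => / branch_prod 1 n) (seq m (S D)) <= 4 * / branch_prod 1 m)
    by apply H.
  induction D as [|D IH]; intros k.
  - pose proof (Rinv_0_lt_compat _ (branch_prod_pos 1 k)). unfold lsum. simpl. lra.
  - split; [apply IH|].
    destruct (IH (S (S k))) as [H _].
    pose proof (inv_branch_prod_S k). pose proof (inv_branch_prod_SS k).
    pose proof (Rinv_0_lt_compat _ (branch_prod_pos 1 k)).
    unfold lsum in *. simpl in *. lra.
Qed.

Lemma weight_sqr_sum_bound (l : list (list nat)) : NoDup l -> (forall e, In e l -> edge dB dR e) ->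
  lsum (fun e => weight e * weight e) l <= 4 * INR (S dR).
Proof.
  intros Hnodup Hedges.
  set (D := fold_right max 0%nat (map (@length nat) l)).
  assert (Hincl : incl l (flat_map (fun n => words_from 0 (S n)) (seq 0 D))).
  { intros e He. destruct (Hedges e He) as [Hvalid Hne]. destruct e as [|i w]; [congruence|].
    apply in_flat_map. exists (length w). split.
    - apply in_seq. enough (length (i :: w) <= D)%nat by (simpl in *; lia).
      unfold D. clear -He. induction l as [|e' l IH]; simpl; [contradiction|].
      destruct He as [-> | He];
        [apply Nat.le_max_l | eapply Nat.le_trans; [exact (IH He) | apply Nat.le_max_r]].
    - exact (words_from_complete (i :: w) 0 Hvalid). }
  eapply Rle_trans; [exact (lsum_incl _ _ _ (fun e => Rle_0_sqr (weight e)) Hnodup Hincl)|].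
  rewrite lsum_flat_map.
  eapply Rle_trans.
  { apply (lsum_le _ (fun n => INR (S dR) * / branch_prod 1 n)). intros n _. apply weight_sqr_level. }
  rewrite lsum_scal. pose proof (lsum_inv_branch_prod_seq D 0) as Hgeom.
  simpl branch_prod in Hgeom. rewrite Rinv_1 in Hgeom. pose proof (pos_INR (S dR)). nra.
Qed.

End TreeWeights.

Lemma is_derive_RtoC (h : R -> R) x d :
  is_derive h x d -> is_derive (V := C_R_NormedModule) (fun t => RtoC (h t)) x (RtoC d).
Proof.
  intros H. eapply is_derive_eq_val.
  - eapply is_derive_ext; [|exact (is_derive_scal_l (V := C_R_NormedModule) h x d (RtoC 1) H)].
    intros t. apply C_ext; simpl; R_ops; ring.
  - apply C_ext; simpl; R_ops; ring.
Qed.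

Lemma filterlim_within_of_ex_derive (F : R -> C) a (dom : R -> Prop) :
  ex_derive (V := C_R_NormedModule) F a -> filterlim F (within dom (locally a)) (locally (F a)).
Proof.
  intros H. apply (filterlim_filter_le_1 (F := locally a)); [apply filter_le_within|].
  exact (ex_derive_continuous F a H).
Qed.

Lemma RInt_scal_R (c : R) (F : R -> R) a b :
  ex_RInt F a b -> RInt (fun x => c * F x) a b = c * RInt F a b.
Proof. exact (RInt_scal F a b c). Qed.

Section TreeEigenfunction.

Variables dB dR : nat.
Hypothesis HdB : (1 <= dB)%nat.
Hypothesis HdR : (1 <= dR)%nat.
Hypothesis Hprod : (1 < dR * dB)%nat.
Variable k : Z.
Hypothesis Hk : (1 <= k)%Z.

Let w := IZR k * PI.

Lemma freq_pos : 0 < w.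
Proof. unfold w. pose proof PI_RGT_0. assert (1 <= IZR k) by now apply IZR_le. nra. Qed.

Definition tree_f (e : list nat) (x : R) : C := RtoC (weight dB dR e * (sin (w * x) / w)).
Definition tree_g (e : list nat) (x : R) : C := RtoC (weight dB dR e * cos (w * x)).

Lemma is_derive_tree_f e x : is_derive (V := C_R_NormedModule) (tree_f e) x (tree_g e x).
Proof. pose proof freq_pos. apply is_derive_RtoC. auto_derive; auto. field. lra. Qed.

Lemma is_derive_tree_g e x :
  is_derive (V := C_R_NormedModule) (tree_g e) x (- (RtoC (w ^ 2) * tree_f e x))%C.
Proof.
  pose proof freq_pos. eapply is_derive_eq_val; [apply is_derive_RtoC; auto_derive; auto|].
  unfold tree_f. apply C_ext; simpl; field; lra.
Qed.

Lemma tree_f_endpt e v : tree_f e (endpt v) = RtoC 0.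
Proof.
  pose proof freq_pos. unfold tree_f, endpt. destruct (Nat.even (length v)).
  - rewrite Rmult_0_r, sin_0. apply C_ext; simpl; field; lra.
  - rewrite Rmult_1_r. replace (sin w) with 0 by (symmetry; apply sin_eq_0_1; now exists k).
    apply C_ext; simpl; field; lra.
Qed.

Lemma tree_g_kirchhoff v : Csum (map (fun e => outder v (tree_g e)) (incident dB dR v)) = RtoC 0.
Proof.
  set (kappa := if Nat.even (length v) then 1 else - cos w).
  rewrite (map_ext _ (fun e => RtoC (kappa * weight dB dR e))).
  - rewrite Csum_RtoC, lsum_scal, weight_kirchhoff by assumption. apply C_ext; simpl; ring.
  - intros e. unfold outder, tree_g, kappa. destruct (Nat.even (length v)); apply C_ext; simpl.
    + rewrite Rmult_0_r, cos_0. ring.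
    + ring.
    + rewrite Rmult_1_r. ring.
    + ring.
Qed.

Lemma tree_f_L2_bound : exists M : R, forall l : list (list nat), NoDup l ->
  (forall e, In e l -> edge dB dR e) ->
  fold_right Rplus 0 (map (fun e => RInt (fun x => Cmod (tree_f e x) ^ 2) 0 1) l) <= M.
Proof.
  set (I := RInt (fun x => (sin (w * x) / w) ^ 2) 0 1).
  exists (Rabs I * (4 * INR (S dR))). intros l Hnodup Hedges.
  change (fold_right Rplus 0 (map ?h l)) with (lsum h l).
  rewrite (lsum_ext _ (fun e => I * (weight dB dR e * weight dB dR e))).
  - rewrite lsum_scal. pose proof (weight_sqr_sum_bound dB dR HdB HdR Hprod l Hnodup Hedges).
    pose proof (lsum_nonneg (fun e => weight dB dR e * weight dB dR e) l (fun e => Rle_0_sqr _)).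
    pose proof (Rle_abs I). pose proof (Rabs_pos I). nra.
  - intros e. unfold I. rewrite Rmult_comm, <- RInt_scal_R.
    + apply RInt_ext. intros x _. unfold tree_f. rewrite Cmod_R, pow2_abs. R_ops. ring.
    + apply (ex_RInt_continuous (V := R_CompleteNormedModule)). intros z _.
      apply (ex_derive_continuous (K := R_AbsRing) (V := R_NormedModule)). auto_derive; auto.
Qed.

Lemma tree_f_nonzero : tree_f [0%nat] (/ (2 * IZR k)) <> RtoC 0.
Proof.
  pose proof freq_pos. assert (1 <= IZR k) by now apply IZR_le.
  unfold tree_f. replace (w * / (2 * IZR k)) with (PI / 2) by (unfold w; field; lra).
  rewrite sin_PI2. unfold weight, root_sign. simpl. intros E. injection E as E.
  apply (Rmult_eq_compat_r w) in E. field_simplify in E; lra.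
Qed.

Lemma tree_eigenvalue_sqr_pi : tree_eigenvalue dB dR (RtoC (w ^ 2)).
Proof.
  exists tree_f, tree_g. split; [|split; [|split]].
  - intros e _. split; [|split; [|split; [|split]]].
    + intros x _. split; [apply is_derive_tree_f | apply is_derive_tree_g].
    + apply filterlim_within_of_ex_derive. eexists. apply is_derive_tree_f.
    + apply filterlim_within_of_ex_derive. eexists. apply is_derive_tree_g.
    + apply filterlim_within_of_ex_derive. eexists. apply is_derive_tree_f.
    + apply filterlim_within_of_ex_derive. eexists. apply is_derive_tree_g.
  - intros v _. split; [|apply tree_g_kirchhoff].
    intros e1 e2 _ _. now rewrite !tree_f_endpt.
  - exact tree_f_L2_bound.
  - exists [0%nat], (/ (2 * IZR k)). assert (1 <= IZR k) by now apply IZR_le. split; [|split].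
    + split; [|congruence]. unfold vertex. simpl. split; [unfold nchild; simpl; lia | exact I].
    + split; [left; apply Rinv_0_lt_compat; lra|]. rewrite <- Rinv_1. apply Rinv_le_contravar; lra.
    + exact tree_f_nonzero.
Qed.

End TreeEigenfunction.

Section Eigenvalue.

Variables dB dR : nat.
Hypothesis HdB : (1 <= dB)%nat.
Hypothesis HdR : (1 <= dR)%nat.

Lemma sigma2_ss_zero_degrees lam : sigma2 dB dR lam -> ss lam = RtoC 0 -> (1 < dR * dB)%nat.
Proof.
  intros [Hsigma1 _] Hs. destruct (Nat.lt_ge_cases 1 (dR * dB)) as [| Hle]; [assumption | exfalso].
  assert (dB = 1%nat /\ dR = 1%nat) as [-> ->] by (split; nia).
  apply Hsigma1. exists (RtoC 1). split.
  - apply (is_eig2_T0_ss_zero 1 1 lam (RtoC 1) Hs). ring.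
  - rewrite Cmod_R, Rabs_R1. unfold Defs.bound. simpl. now rewrite Rmult_1_r, sqrt_1, Rinv_1.
Qed.

Lemma sigma2_tree_eigenvalue lam : sigma2 dB dR lam ->
  (exists x, 0 <= x <= 1 /\ Ufun dB dR lam x <> RtoC 0) ->
  (exists x, 0 <= x <= 1 /\ Vfun dB dR lam x <> RtoC 0) ->
  tree_eigenvalue dB dR lam.
Proof.
  intros Hsigma2 [xu [_ HU]] [xv [_ HV]].
  destruct (sigma2_ss_or_cc dB dR HdB HdR lam Hsigma2) as [Hs | Hc].
  - pose proof (sigma2_ss_zero_degrees lam Hsigma2 Hs) as Hprod.
    destruct (ss_zero_sqr_pi lam Hs) as (k & Hk & ->).
    exact (tree_eigenvalue_sqr_pi dB dR HdB HdR Hprod k Hk).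
  - destruct (cc_zero_U_or_V_zero dB dR HdB HdR lam (proj1 Hsigma2) Hc) as [HU0 | HV0].
    + exfalso. exact (HU (HU0 xu)).
    + exfalso. exact (HV (HV0 xv)).
Qed.

End Eigenvalue.

Theorem lemma4p5 (dB dR : nat) (HdB : (1 <= dB)%nat) (HdR : (1 <= dR)%nat) :
  (* sigma_2 is a subset of R (it is a subset of C \ sigma_1 by definition) *)
  (forall lam : C, sigma2 dB dR lam -> snd lam = 0) /\
  (* sigma_2 is discrete *)
  (forall lam : C, sigma2 dB dR lam ->
     exists eps : R, 0 < eps /\
       forall mu : C, sigma2 dB dR mu -> Cmod (Cminus mu lam) < eps -> mu = lam) /\
  (* if dR dB > 1 and s(lam) = 0 then lam is in sigma_2 *)
  ((1 < dR * dB)%nat -> forall lam : C, ss lam = RtoC 0 -> sigma2 dB dR lam) /\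
  (* U and V are not identically zero when s(lam) = 0 (lam outside sigma_1) *)
  (forall lam : C, ~ sigma1 dB dR lam -> ss lam = RtoC 0 ->
     (exists x, 0 <= x <= 1 /\ Ufun dB dR lam x <> RtoC 0) /\
     (exists x, 0 <= x <= 1 /\ Vfun dB dR lam x <> RtoC 0)) /\
  (* eigenvalue statement *)
  (forall lam : C, sigma2 dB dR lam ->
     (exists x, 0 <= x <= 1 /\ Ufun dB dR lam x <> RtoC 0) ->
     (exists x, 0 <= x <= 1 /\ Vfun dB dR lam x <> RtoC 0) ->
     tree_eigenvalue dB dR lam).
Proof.
  split; [|split; [|split; [|split]]].
  - exact (sigma2_real dB dR HdB HdR).
  - exact (sigma2_isolated dB dR HdB HdR).
  - intros Hprod lam. exact (ss_zero_sigma2 dB dR HdB HdR lam Hprod).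
  - exact (ss_zero_U_V_nonzero dB dR HdB HdR).
  - exact (sigma2_tree_eigenvalue dB dR HdB HdR).
Qed.
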